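(* Let $\theta_n>0$ and let $L_n\ge1$ be an integer. Let $X$ be a real tensor (the output of the first MatMul layer of a network on a given input, which is computed identically in the ANN and in the PASC SNN). Let $z^l=\widehat h(X)$ be the output of the first QCFS activation layer of the ANN, and let $s^l=(s^l(1),\dots,s^l(L_n))$ be the output of the PASC input-layer procedure (described in the context) on $X$. Then (a) $\sum_{i=1}^{L_n}s^l(i)=z^l$, and (b) every entry of $s^l$ lies in the set $\{0,\theta_n/L_n\}$.
   Context: The QCFS activation with quantization step $L_n$ and threshold $\theta_n$ is $\widehat h(X)=\theta_n\,\mathrm{clip}\!\left(\frac{1}{L_n}\left\lfloor \frac{X L_n}{\theta_n}+\frac12\right\rfloor,0,1\right)$ (elementwise), where $\mathrm{clip}(y,0,1)=\min(\max(y,0),1)$. $H$ denotes the Heaviside step function, $H(y)=1$ if $y\ge0$ and $0$ otherwise. PASC input-layer procedure (elementwise): set $\theta^*=\theta_n/L_n$ and initial membrane potential $\mathrm{mem}(0)=\widehat h(X)$; for $t=1,\dots,L_n$ set $s^l(t)=H(\mathrm{mem}(t-1)-\theta^* )\cdot\theta^*$ and $\mathrm{mem}(t)=\mathrm{mem}(t-1)-s^l(t)$; the output is the stack $s^l$ of $s^l(1),\dots,s^l(L_n)$. *)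

From mathcomp Require Import all_boot all_order all_algebra.
From mathcomp Require Import reals.
Set Implicit Arguments. Unset Strict Implicit. Unset Printing Implicit Defensive.
Import Order.TTheory GRing.Theory Num.Theory.
Local Open Scope ring_scope.

Section Defs.
Variable R : realType.

Definition clip01 (y : R) : R := Num.min (Num.max y 0) 1.

Definition heaviside (y : R) : R := if 0 <= y then 1 else 0.

Definition qcfs (theta : R) (L : nat) (x : R) : R :=
  theta * clip01 ((L%:R)^-1 * (Num.floor (x * L%:R / theta + 2^-1))%:~R).

(* PASC input layer, scalar version.  pasc_mem t = mem(t); pasc_spike t = s(t) for t >= 1. *)
Fixpoint pasc_mem (theta : R) (L : nat) (x : R) (t : nat) : R :=
  match t with
  | 0 => qcfs theta L x
  | t'.+1 =>
      let m := pasc_mem theta L x t' in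
      m - heaviside (m - theta / L%:R) * (theta / L%:R)
  end.

Definition pasc_spike (theta : R) (L : nat) (x : R) (t : nat) : R :=
  let m := pasc_mem theta L x t.-1 in
  heaviside (m - theta / L%:R) * (theta / L%:R).

Definition qcfs_tensor (I : Type) theta L (X : I -> R) : I -> R :=
  fun i => qcfs theta L (X i).

(* Output stack: for t : 'I_L, entry (t, i) is s(t+1) at index i. *)
Definition pasc_input_layer (I : Type) theta L (X : I -> R) : 'I_L -> I -> R :=
  fun t i => pasc_spike theta L (X i) t.+1.
End Defs.
Arguments pasc_input_layer {R I} theta L X _ _.
Arguments qcfs_tensor {R I} theta L X _.

(** Every QCFS value is a multiple [k * d] of the quantum [d = theta / L] with
    [0 <= k <= L], since flooring makes the numerator an integer and clipping
    confines it to [[0, L]].  Starting from [k * d], the PASC neuron fires [d]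
    exactly while its potential is still positive, so its potential after [t]
    steps is [(k - t) * d] (truncated subtraction) and it fires at steps
    [1, ..., k] and nowhere else; the [L >= k] spikes therefore add up to
    [k * d]. *)
From mathcomp Require Import all_boot all_order all_algebra.
From mathcomp Require Import reals.
Import Order.TTheory GRing.Theory Num.Theory.
Local Open Scope ring_scope.

Lemma clamp_int_nat (R : realDomainType) (f : int) (L : nat) :
  exists2 k : nat, (k <= L)%N & Num.min (Num.max f%:~R 0) L%:R = k%:R :> R.
Proof.
case: f => n; last first.
  exists 0%N => //; rewrite max_r ?min_l //.
  by rewrite NegzE mulrNz oppr_le0 ler0z.
by exists (minn n L); rewrite ?geq_minr // max_l // -natr_min minEnat.
Qed.

Lemma clip01_invMr (R : realType) (c y : R) :
  0 < c -> clip01 (c^-1 * y) = c^-1 * Num.min (Num.max y 0) c.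
Proof.
move=> c_gt0; have c_ge0 : 0 <= c^-1 by rewrite invr_ge0 ltW.
by rewrite /clip01 minr_pMr // maxr_pMr // mulr0 mulVf ?gt_eqF.
Qed.

Section PascInputLayer.
Context {R : realType} {theta : R} {L : nat}.
Hypotheses (theta_gt0 : 0 < theta) (L_gt0 : (0 < L)%N).

Let d := theta / L%:R.

Lemma quantum_gt0 : 0 < d.
Proof. by rewrite divr_gt0 ?ltr0n. Qed.

Lemma qcfs_quantized (x : R) :
  exists2 k : nat, (k <= L)%N & qcfs theta L x = d *+ k.
Proof.
have [k le_kL clamp_k] := clamp_int_nat R (Num.floor (x * L%:R / theta + 2^-1)) L.
exists k => //.
by rewrite /qcfs clip01_invMr ?ltr0n // clamp_k mulrC mulrAC mulr_natr mulrC.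
Qed.

Lemma heaviside_mulrn_subr (n : nat) : heaviside (d *+ n - d) = (0 < n)%N%:R.
Proof.
rewrite /heaviside; case: n => [|n].
  by rewrite mulr0n sub0r oppr_ge0 leNgt quantum_gt0.
by rewrite mulrSr addrK mulrn_wge0 // ltW // quantum_gt0.
Qed.

Section FromQuantizedPotential.
Context {x : R} {k : nat}.
Hypothesis qcfs_x : qcfs theta L x = d *+ k.

Lemma pasc_mem_quantized (t : nat) : pasc_mem theta L x t = d *+ (k - t).
Proof.
elim: t => [|t IH] /=; first by rewrite subn0 qcfs_x.
rewrite IH heaviside_mulrn_subr subnS; case: (k - t)%N => [|n].
  by rewrite mul0r subr0.
by rewrite mul1r mulrSr addrK.
Qed.

Lemma pasc_spike_quantized (t : nat) :
  pasc_spike theta L x t.+1 = if (t < k)%N then d else 0.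
Proof.
by rewrite /pasc_spike pasc_mem_quantized heaviside_mulrn_subr subn_gt0; case: ltnP;
  rewrite ?mul1r ?mul0r.
Qed.

Lemma sum_pasc_spikes (n : nat) : (k <= n)%N ->
  \sum_(t < n) pasc_spike theta L x t.+1 = d *+ k.
Proof.
move=> le_kn.
under eq_bigr => t _ do rewrite pasc_spike_quantized.
by rewrite -big_mkcond /= (big_ord_narrow le_kn) sumr_const card_ord.
Qed.

End FromQuantizedPotential.

Lemma pasc_spike_binary (x : R) (t : nat) :
  pasc_spike theta L x t = 0 \/ pasc_spike theta L x t = d.
Proof. by rewrite /pasc_spike /heaviside; case: ifP; rewrite ?mul0r ?mul1r; auto. Qed.

End PascInputLayer.

Theorem theorem3 (R : realType) (I : Type) (theta : R) (L : nat)
    (htheta : 0 < theta) (hL : (1 <= L)%N) (X : I -> R) :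
  (forall i : I,
     \sum_(t < L) pasc_input_layer theta L X t i = qcfs_tensor theta L X i) /\
  (forall (t : 'I_L) (i : I),
     pasc_input_layer theta L X t i = 0 \/
     pasc_input_layer theta L X t i = theta / L%:R).
Proof.
split=> [i | t i]; last exact: pasc_spike_binary.
have [k le_kL qcfs_Xi] := qcfs_quantized (theta := theta) hL (X i).
by rewrite /qcfs_tensor qcfs_Xi -(sum_pasc_spikes htheta hL qcfs_Xi _ le_kL).
Qed.
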